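(* Let $D\in\mathcal{O}_d$ be a discriminant and let $\epsilon_D=\frac12(t_0+u_0\sqrt{D})$ be a fundamental solution of $t^2-u^2D=4$. For $n\ge 0$ write $\epsilon_D^{\,n+1}=\frac12(t_n+u_n\sqrt{D})$ with $t_n,u_n\in\mathcal{O}_d$. Then for every $n\ge 0$, $$|t_n|^2-3<|\epsilon_D|^{2(n+1)}<|t_n|^2+3.$$
   Context: Let $d>0$ be a square-free rational integer, $k_d=\mathbb{Q}(\sqrt{-d})$, and $\mathcal{O}_d$ its ring of integers. An element $D\in\mathcal{O}_d$ is a discriminant if $D$ is not a perfect square in $\mathcal{O}_d$ and $D\equiv x^2 \pmod{4\mathcal{O}_d}$ for some $x\in\mathcal{O}_d$. The square root $\sqrt{D}$ is chosen with argument in $[0,\pi)$. For a solution $(t,u)\in\mathcal{O}_d^2$ of $t^2-u^2D=4$ set $\epsilon_{t,u}=\frac12(t+u\sqrt{D})$. A solution $(t_0,u_0)$ is fundamental if $|\epsilon_{t_0,u_0}|$ is the smallest value larger than $1$ among all $|\epsilon_{t,u}|$ for solutions $(t,u)$; then one writes $\epsilon_D=\epsilon_{t_0,u_0}$. *)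

From HB Require Import structures.
From mathcomp Require Import all_boot all_order all_algebra all_field.
Set Implicit Arguments. Unset Strict Implicit. Unset Printing Implicit Defensive.
Import Order.TTheory GRing.Theory Num.Theory.
Local Open Scope ring_scope.

Definition square_free (d : nat) : Prop :=
  (0 < d)%N /\ forall p : nat, prime p -> ~~ (p * p %| d)%N.

(* Generator of the ring of integers O_d of Q(sqrt(-d)):
   (1 + sqrt(-d))/2 if -d = 1 mod 4 (i.e. d = 3 mod 4), sqrt(-d) otherwise. *)
Definition omega (d : nat) : algC :=
  if (d %% 4 == 3)%N then (1 + sqrtC (- d%:R)) / 2 else sqrtC (- d%:R).

Definition inO (d : nat) (z : algC) : Prop :=
  exists a b : int, z = a%:~R + b%:~R * omega d.

Definition is_square_O (d : nat) (D : algC) : Prop :=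
  exists x, inO d x /\ D = x ^+ 2.

Definition discriminant (d : nat) (D : algC) : Prop :=
  [/\ inO d D, ~ is_square_O d D &
      exists x y, [/\ inO d x, inO d y & D = x ^+ 2 + 4 * y]].

(* sqrt D with argument in [0, pi): sqrtC is the 2.-root with minimal
   nonnegative argument. *)
Definition pell_sol (d : nat) (D t u : algC) : Prop :=
  [/\ inO d t, inO d u & t ^+ 2 - u ^+ 2 * D = 4].

Definition eps (D t u : algC) : algC := (t + u * sqrtC D) / 2.

Definition fundamental (d : nat) (D t0 u0 : algC) : Prop :=
  [/\ pell_sol d D t0 u0, 1 < `|eps D t0 u0| &
      forall t u, pell_sol d D t u -> 1 < `|eps D t u| ->
        `|eps D t0 u0| <= `|eps D t u| ].

From HB Require Import structures.
From mathcomp Require Import all_boot all_order all_algebra all_field.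
From mathcomp Require Import ring zify.
Import Order.TTheory GRing.Theory Num.Theory.
Local Open Scope ring_scope.

(** Let [s = sqrtC D] and [e' = (t0 - u0 s)/2], so that [e e' = 1] by the
    Pell equation.  Since [O_d] is integrally closed and [D] is not a square
    in [O_d], [s] is not in [k_d]; hence [1, s] are [O_d]-independent and
    conjugation [x + y s |-> x - y s] is well defined on [O_d[s]].  Applied to
    [e^(n+1) = (tn + un s)/2] it gives [tn = w + 1/w] with [w = e^(n+1)], and
    [ |w|^2 - |w + 1/w|^2 = -(w / w^* + w^* / w + |w|^-2) ] has modulus at most
    [2 + |w|^-2 < 3]. *)

Lemma sqfree_dvdn_sq {d c g : nat} : square_free d -> (0 < c)%N ->
  (c ^ 2 %| d * g ^ 2)%N -> (c %| g)%N.
Proof.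
move=> [d_gt0 sqf] c_gt0 dvd_cg.
have h_gt0 : (0 < gcdn c g)%N by rewrite gcdn_gt0 c_gt0.
set h := gcdn c g in h_gt0 *.
have Ec : c = (c %/ h * h)%N by rewrite divnK // dvdn_gcdl.
have Eg : g = (g %/ h * h)%N by rewrite divnK // dvdn_gcdr.
have cop : coprime (c %/ h) (g %/ h).
  rewrite /coprime -(eqn_pmul2l h_gt0) muln1 muln_gcdr.
  by rewrite [(h * (c %/ h))%N]mulnC -Ec [(h * _)%N]mulnC -Eg.
move: dvd_cg; rewrite Ec Eg !expnMn mulnA dvdn_pmul2r ?expn_gt0 ?h_gt0 //.
rewrite Gauss_dvdl; last by rewrite coprimeXl // coprimeXr.
move=> dvd_cd.
suff -> : (c %/ h = 1)%N by rewrite mul1n -Eg /h dvdn_gcdr.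
have ch_gt0 : (0 < c %/ h)%N by rewrite divn_gt0 // dvdn_leq // dvdn_gcdl.
case: (ltngtP (c %/ h) 1) => // [|c_gt1]; first by rewrite ltnNge ch_gt0.
have p_pr := pdiv_prime c_gt1.
case/negP: (sqf _ p_pr); apply: dvdn_trans dvd_cd.
by rewrite expnS expn1 dvdn_mul // pdiv_dvd.
Qed.

Lemma sqfree_dvdz_sq {d : nat} {c g : int} : square_free d -> c != 0 ->
  (c ^+ 2 %| d%:Z * g ^+ 2)%Z -> (c %| g)%Z.
Proof.
move=> sqf c_neq0; rewrite !dvdzE abszM !abszX /=.
by apply: sqfree_dvdn_sq sqf _; rewrite absz_gt0.
Qed.

Lemma sqfree_mod4_neq0 {d : nat} : square_free d -> (d %% 4 != 0)%N.
Proof.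
move=> [_ sqf]; apply/negP => /eqP d_mod4.
by have /negP[] := sqf 2 isT; rewrite /dvdn d_mod4.
Qed.

(* [(E + F sqrt(-d)) / C] squares to [(p + q sqrt(-d)) / 2]: its double is integral. *)
Lemma sqfree_dvdz_double_coords {d : nat} {E F C p q : int} :
  square_free d -> C != 0 ->
  2 * (E ^+ 2 - d%:Z * F ^+ 2) = C ^+ 2 * p -> 4 * E * F = C ^+ 2 * q ->
  (C %| 2 * E)%Z /\ (C %| 2 * F)%Z.
Proof.
move=> sqf C_neq0 eq_re eq_im.
have norm_eq : (2 * (E ^+ 2 + d%:Z * F ^+ 2)) ^+ 2
    = (C ^+ 2) ^+ 2 * (p ^+ 2 + d%:Z * q ^+ 2).
  have -> : (2 * (E ^+ 2 + d%:Z * F ^+ 2)) ^+ 2 =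
    (2 * (E ^+ 2 - d%:Z * F ^+ 2)) ^+ 2 + d%:Z * (4 * E * F) ^+ 2 by ring.
  by rewrite eq_re eq_im; ring.
have dvd_norm : (C ^+ 2 %| 2 * (E ^+ 2 + d%:Z * F ^+ 2))%Z.
  by rewrite -(@dvdz_pexp2r _ _ 2) // norm_eq dvdz_mulr.
split.
  rewrite -(@dvdz_pexp2r _ _ 2) //.
  have -> : (2 * E) ^+ 2 = 2 * (E ^+ 2 + d%:Z * F ^+ 2) + C ^+ 2 * p.
    by rewrite -eq_re; ring.
  by rewrite rpredD // dvdz_mulr.
apply: sqfree_dvdz_sq sqf C_neq0 _.
have -> : d%:Z * (2 * F) ^+ 2 = 2 * (E ^+ 2 + d%:Z * F ^+ 2) - C ^+ 2 * p.
  by rewrite -eq_re; ring.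
by rewrite rpredB // dvdz_mulr.
Qed.

(* [O_d] is the set of [(a + b sqrt(-d)) / 2] with [O_parity d a b]. *)
Definition O_parity (d : nat) (a b : int) : Prop :=
  if (d %% 4 == 3)%N then exists k, a - b = 2 * k
  else exists k l, a = 2 * k /\ b = 2 * l.

Lemma int_even_or_odd (x : int) : exists a, x = 2 * a \/ x = 2 * a + 1.
Proof. by exists (x %/ 2)%Z; lia. Qed.

Lemma O_parity_sqr {d : nat} {A B p q : int} : (d %% 4 != 0)%N ->
  O_parity d p q -> A * A - d%:Z * B * B = 2 * p -> A * B = q -> O_parity d A B.
Proof.
rewrite /O_parity => d_mod4.
have Ed : d%:Z = 4 * (d %/ 4)%N%:Z + (d %% 4)%N%:Z by lia.
(* Hiding [d %/ 4] behind [m] keeps [lia] from unfolding the division. *)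
move: d_mod4 Ed; set m := (d %/ 4)%N.
have : (d %% 4 < 4)%N by rewrite ltn_pmod.
case: (d %% 4)%N => [|[|[|[|r]]]] //= _ _ -> ;
have [a [->|->]] := int_even_or_odd A; have [b [->|->]] := int_even_or_odd B;
first [ move=> [k [l [hk hl]]] e1 e2 | move=> [k hk] e1 e2 ];
first [ (exfalso; lia) | (exists (a - b); lia) | (exists a, b; lia) ].
Qed.

Definition inK (d : nat) (z : algC) : Prop :=
  exists C E F : int, C != 0 /\ z * C%:~R = E%:~R + F%:~R * sqrtC (- d%:R).

Ltac push_intr := rewrite ?(intrD, intrB, intrM, intrN, rmorphXn).

Section QuadraticIntegers.

Context {d : nat}.
Local Notation rd := (sqrtC (- d%:R : algC)).

Lemma rd_sqr : rd ^+ 2 = - d%:R.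
Proof. exact: sqrtCK. Qed.

Lemma intr_d : ((d%:Z)%:~R : algC) = - rd ^+ 2.
Proof. by rewrite rd_sqr opprK. Qed.

Lemma rd_coordI (a b a' b' : int) : (0 < d)%N ->
  a%:~R + b%:~R * rd = a'%:~R + b'%:~R * rd -> a = a' /\ b = b'.
Proof.
move=> d_gt0 eq_ab; have [eq_b|neq_b] := eqVneq b b'.
  by move: eq_ab; rewrite eq_b => /addIr /intr_inj.
have bC : ((b - b')%:~R : algC) != 0 by rewrite intr_eq0 subr_eq0.
have rd_real : rd \is Num.real.
  have -> : rd = (a' - a)%:~R / (b - b')%:~R.
    apply: (mulIf bC); rewrite divfK //; push_intr.
    transitivity ((a%:~R + b%:~R * rd) - (a%:~R + b'%:~R * rd)); first ring.
    by rewrite eq_ab; ring.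
  by rewrite rpred_div ?realz.
have := real_exprn_even_ge0 (n := 2) rd_real isT.
by rewrite rd_sqr oppr_ge0 lern0 => /eqP d0; rewrite d0 in d_gt0.
Qed.

Lemma omega_sqr : exists c1 c2 : int, omega d ^+ 2 = c1%:~R + c2%:~R * omega d.
Proof.
rewrite /omega; case: ifP => [d_mod4|_]; last first.
  by exists (- d%:Z), 0; rewrite mul0r addr0 intrN intr_d opprK.
have Ed : (d%:R : algC) = (d %/ 4)%N%:R * 4 + 3.
  by rewrite {1}(divn_eq d 4) (eqP d_mod4) natrD natrM.
exists (- ((d %/ 4)%N.+1)%:Z), 1; rewrite intrN -pmulrn mul1r mulrSr.
have Erd := rd_sqr; rewrite [in RHS]Ed in Erd.
have -> : ((1 + rd) / 2) ^+ 2 = (1 + 2 * rd + rd ^+ 2) / 4 by field.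
by rewrite Erd; field.
Qed.

Lemma inO_int (k : int) : inO d k%:~R.
Proof. by exists k, 0; rewrite mul0r addr0. Qed.

Lemma inO_add x y : inO d x -> inO d y -> inO d (x + y).
Proof.
by move=> [a [b ->]] [a' [b' ->]]; exists (a + a'), (b + b'); push_intr; ring.
Qed.

Lemma inO_opp x : inO d x -> inO d (- x).
Proof. by move=> [a [b ->]]; exists (- a), (- b); push_intr; ring. Qed.

Lemma inO_sub x y : inO d x -> inO d y -> inO d (x - y).
Proof. by move=> Ox Oy; apply/inO_add/inO_opp. Qed.

Lemma inO_mul x y : inO d x -> inO d y -> inO d (x * y).
Proof.
move=> [a [b ->]] [a' [b' ->]]; have [c1 [c2 Ew]] := omega_sqr.
exists (a * a' + b * b' * c1), (a * b' + a' * b + b * b' * c2).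
have -> : (a%:~R + b%:~R * omega d) * (a'%:~R + b'%:~R * omega d) =
    a%:~R * a'%:~R + (a%:~R * b'%:~R + a'%:~R * b%:~R) * omega d
    + b%:~R * b'%:~R * omega d ^+ 2 :> algC by ring.
by rewrite Ew; push_intr; ring.
Qed.

Lemma inO_exp x k : inO d x -> inO d (x ^+ k).
Proof.
move=> Ox; elim: k => [|k IHk]; first exact: (inO_int 1).
by rewrite exprS; apply: inO_mul.
Qed.

Lemma inO_halfP z :
  inO d z <-> exists a b : int, z = (a%:~R + b%:~R * rd) / 2 /\ O_parity d a b.
Proof.
rewrite /inO /O_parity /omega; case: ifP => _; split.
- move=> [x [y ->]]; exists (2 * x + y), y; split; last by exists x; lia.
  by push_intr; field.
- move=> [a [b [-> [k ab]]]]; exists k, b.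
  have -> : a = 2 * k + b by lia.
  by push_intr; field.
- move=> [x [y ->]]; exists (2 * x), (2 * y); split; last by exists x, y.
  by push_intr; field.
- by move=> [a [b [-> [k [l [-> ->]]]]]]; exists k, l; push_intr; field.
Qed.

Lemma inK_of_mul Q s : (0 < d)%N -> inO d Q -> Q != 0 -> inO d (Q * s) ->
  inK d s.
Proof.
move=> d_gt0 /inO_halfP[a [b [EQ _]]] Q_neq0 /inO_halfP[a' [b' [EQs _]]].
exists (a * a + d%:Z * b * b), (a' * a + d%:Z * b' * b), (b' * a - a' * b).
split.
  apply: contra Q_neq0 => /eqP norm0.
  have [a0 b0] : a = 0 /\ b = 0 by split; nia.
  by rewrite EQ a0 b0 !mul0r addr0 mul0r.
have -> : s * (a * a + d%:Z * b * b)%:~R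
    = 2 * (Q * s) * (a%:~R - b%:~R * rd) :> algC.
  by rewrite EQ; push_intr; rewrite intr_d; field.
by rewrite EQs; push_intr; rewrite intr_d; field.
Qed.

Lemma inO_of_inK_sqr s : square_free d -> inK d s -> inO d (s ^+ 2) -> inO d s.
Proof.
move=> sqf [C [E [F [C_neq0 EsC]]]] /inO_halfP[p [q [Es2 pq]]].
have d_gt0 : (0 < d)%N by case: sqf.
have CC_neq0 : (C%:~R : algC) != 0 by rewrite intr_eq0.
have [eq_re eq_im] :
    2 * (E ^+ 2 - d%:Z * F ^+ 2) = C ^+ 2 * p /\ 4 * E * F = C ^+ 2 * q.
  apply: rd_coordI => //; transitivity (C%:~R ^+ 2 * (2 * s ^+ 2)).
    rewrite [RHS]mulrCA -exprMn [_ * s]mulrC EsC.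
    by push_intr; rewrite intr_d; ring.
  by rewrite Es2; push_intr; field.
have [/dvdzP[A EA] /dvdzP[B EB]] :=
  sqfree_dvdz_double_coords sqf C_neq0 eq_re eq_im.
have Es : s = (A%:~R + B%:~R * rd) / 2.
  apply: (mulIf CC_neq0); rewrite EsC.
  apply: (mulIf (x := 2)); first by rewrite pnatr_eq0.
  have -> : (E%:~R + F%:~R * rd) * 2
      = (2 * E)%:~R + (2 * F)%:~R * rd :> algC by push_intr; ring.
  by rewrite EA EB; push_intr; field.
apply/inO_halfP; exists A, B; split => //.
have [eqA eqB] : A * A - d%:Z * B * B = 2 * p /\ 2 * (A * B) = 2 * q.
  apply: rd_coordI => //; transitivity (4 * s ^+ 2).
    by rewrite Es; push_intr; rewrite intr_d; field.
  by rewrite Es2; push_intr; field.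
have eqAB : A * B = q by lia.
exact: O_parity_sqr (sqfree_mod4_neq0 sqf) pq eqA eqAB.
Qed.

Context {D s : algC}.
Hypotheses (sqf : square_free d) (OD : inO d D) (D_nsq : ~ is_square_O d D).
Hypothesis (s_sqr : s ^+ 2 = D).

Lemma sqrt_disc_coordI P Q P' Q' : inO d P -> inO d Q -> inO d P' -> inO d Q' ->
  P + Q * s = P' + Q' * s -> P = P' /\ Q = Q'.
Proof.
move=> OP OQ OP' OQ' eqPQ.
suff eqQ : Q = Q' by split=> //; move: eqPQ; rewrite eqQ => /addIr.
have [//|neqQ] := eqVneq Q Q'; case: D_nsq.
have dQ_neq0 : Q - Q' != 0 by rewrite subr_eq0.
have Ks : inK d s.
  apply: (@inK_of_mul (Q - Q')) => //; first by case: sqf.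
    exact: inO_sub.
  have -> : (Q - Q') * s = P' - P.
    by rewrite -[P' in RHS](addrK (Q' * s)) -eqPQ; ring.
  exact: inO_sub.
by exists s; split; [apply: inO_of_inK_sqr; rewrite // s_sqr|].
Qed.

Lemma inO_pow_conj t u k : inO d t -> inO d u ->
  exists A B, [/\ inO d A, inO d B,
    (t + u * s) ^+ k = A + B * s & (t - u * s) ^+ k = A - B * s].
Proof.
move=> Ot Ou; elim: k => [|k [A [B [OA OB EP EM]]]].
  exists 1, 0; rewrite !expr0 mul0r addr0 subr0.
  by split=> //; [exact: (inO_int 1) | exact: (inO_int 0)].
exists (A * t + B * u * D), (A * u + B * t); split.
- by apply: inO_add; apply: inO_mul => //; apply: inO_mul.
- by apply: inO_add; apply: inO_mul.
- by rewrite exprSr EP -s_sqr; ring.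
- by rewrite exprSr EM -s_sqr; ring.
Qed.

Lemma eps_pow_conj {t u tn un k} :
  inO d t -> inO d u -> inO d tn -> inO d un ->
  ((t + u * s) / 2) ^+ k = (tn + un * s) / 2 ->
  ((t - u * s) / 2) ^+ k = (tn - un * s) / 2.
Proof.
move=> Ot Ou Otn Oun; have [A [B [OA OB EP EM]]] := inO_pow_conj _ _ k Ot Ou.
have two_neq0 : (2 : algC) != 0 by rewrite pnatr_eq0.
have twok_neq0 : (2 : algC) ^+ k != 0 by rewrite expf_neq0.
have O2k : inO d (2 ^+ k) by apply: inO_exp (inO_int 2).
rewrite !expr_div_n EP EM => /eqP; rewrite !eqr_div // => /eqP eq2k.
have [eqA eqB] : 2 * A = 2 ^+ k * tn /\ 2 * B = 2 ^+ k * un.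
  apply: sqrt_disc_coordI; do ?[apply: inO_mul => //; exact: (inO_int 2)].
  by rewrite -mulrA -mulrDr mulrC eq2k; ring.
apply/eqP; rewrite eqr_div //; apply/eqP.
by transitivity (2 * A - 2 * B * s); [ring | rewrite eqA eqB; ring].
Qed.

End QuadraticIntegers.

Lemma normC_add_inv_sqr_bounds (w : algC) : 1 < `|w| ->
  `|w + w^-1| ^+ 2 - 3 < `|w| ^+ 2 < `|w + w^-1| ^+ 2 + 3.
Proof.
move=> w_gt1; have w_gt0 : 0 < `|w| := lt_trans ltr01 w_gt1.
have w_neq0 : w != 0 by rewrite -normr_gt0.
have winv_lt1 : `|w^-1| < 1 by rewrite normfV invf_lt1.
have norm_mulV : `|w| * `|w^-1| = 1 by rewrite -normrM mulfV // normr1.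
rewrite -real_ltr_distl; last by rewrite rpredB // rpredX // normr_real.
have -> : `|w| ^+ 2 - `|w + w^-1| ^+ 2
    = - (w * w^-1^* + w^-1 * w^* + w^-1 * w^-1^*).
  by rewrite !normCK rmorphD /=; ring.
rewrite normrN; apply: (le_lt_trans (ler_normD _ _)).
apply: (le_lt_trans (lerD (ler_normD _ _) (lexx _))).
rewrite !normrM !norm_conjC norm_mulV mulrC norm_mulV -addrA ltrD2l.
have : `|w^-1| * `|w^-1| < 1 by rewrite -expr2 exprn_ilt1.
by rewrite ltrD2l.
Qed.

Theorem proposition3p3 (d : nat) (D t0 u0 : algC) :
  square_free d -> discriminant d D -> fundamental d D t0 u0 ->
  forall (n : nat) (tn un : algC), inO d tn -> inO d un ->
    eps D t0 u0 ^+ n.+1 = eps D tn un ->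
    `|tn| ^+ 2 - 3 < `|eps D t0 u0| ^+ (2 * n.+1) < `|tn| ^+ 2 + 3.
Proof.
move=> sqf [OD D_nsq _] [[Ot0 Ou0 pell] eps_gt1 _] n tn un Otn Oun eps_pow.
have s_sqr : sqrtC D ^+ 2 = D := sqrtCK D.
have eps_inv : (eps D t0 u0)^-1 = (t0 - u0 * sqrtC D) / 2.
  apply: mulr1_eq; transitivity ((t0 ^+ 2 - u0 ^+ 2 * sqrtC D ^+ 2) / 4).
    by rewrite /eps; field.
  by rewrite s_sqr pell divff // pnatr_eq0.
have tn_eq : tn = eps D t0 u0 ^+ n.+1 + (eps D t0 u0 ^+ n.+1)^-1.
  rewrite -exprVn eps_inv (eps_pow_conj sqf OD D_nsq s_sqr Ot0 Ou0 Otn Oun eps_pow).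
  by rewrite eps_pow /eps; field.
rewrite mulnC exprM -[`|_| ^+ n.+1]normrX tn_eq; apply: normC_add_inv_sqr_bounds.
by rewrite normrX exprn_egt1.
Qed.
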